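(* Let $S$ be an inductive $E$-demigroup with associated function $\cdot:S\times E\to E$, and let $P=C^d_E(S)$. Then $P$ becomes a left restriction semigroup under $$(e,s)(f,t)=\big(e\wedge(s\cdot f),\,(e\wedge(s\cdot f))st\big),\qquad D((e,s))=(e,e),$$ for all $(e,s),(f,t)\in P$ (this is the induced left restriction semigroup of the inductive constellation $P$), and in it $(e,s)\le(f,t)$ in the natural order if and only if $e\le_r f$ and $s=et$.
   Context: For a semigroup $S$, $E(S)$ is its set of idempotents; for $e,f\in E(S)$, $e\le_r f$ iff $e=ef$. $E\subseteq E(S)$ is right pre-reduced if $e=ef$ and $f=fe$ imply $e=f$ for $e,f\in E$. A demigroup is a semigroup $S$ with unary $d$ such that $d(x)\in E(S)$, $d(x)x=x$, $d(xy)=d(xd(y))$ for all $x,y$. For $E\subseteq E(S)$, $S$ is an $E$-demigroup if $d(s)\in E$ for all $s$ and $ed(e)=e$ for all $e\in E$. It is inductive if $E$ is right pre-reduced, $(E,\le_r)$ is a meet-semilattice with meet $\wedge$, and there is a function $\cdot:S\times E\to E$ with (I1) for all $t\in S$, $e\in E$, $s\in S$: ($ste=st$ and $sd(t)=s$) iff $s(t\cdot e)=s$; (I2) for $s\in S$, $e,f\in E$: $se=sf=s$ implies $s(e\wedge f)=s$. $C^d_E(S)=\{(e,s)\in E\times S\mid es=s,\ d(e)=d(s)\}$; as a constellation its partial product is $(e,s)\circ(f,t)=(e,st)$, defined exactly when $sf=s$, and $D((e,s))=(e,e)$. A left restriction semigroup is a semigroup with unary operation $D$ satisfying $D(x)x=x$,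 $D(x)D(y)=D(y)D(x)$, $D(D(x)y)=D(x)D(y)$ and $xD(y)=D(xy)x$; its natural order is $s\le t$ iff $s=D(s)t$. *)

Set Implicit Arguments.

Section Defs.
Variable T : Type.
Variable mul : T -> T -> T.

Definition associative_op := forall x y z : T, mul x (mul y z) = mul (mul x y) z.

Definition idem (e : T) : Prop := mul e e = e.

Definition le_r (e f : T) : Prop := e = mul e f.

Definition sub_idem (E : T -> Prop) : Prop := forall e, E e -> idem e.

Definition right_pre_reduced (E : T -> Prop) : Prop :=
  forall e f, E e -> E f -> e = mul e f -> f = mul f e -> e = f.

Definition demigroup (d : T -> T) : Prop :=
  associative_op /\
  (forall x, idem (d x)) /\
  (forall x, mul (d x) x = x) /\
  (forall x y, d (mul x y) = d (mul x (d y))).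

Definition E_demigroup (d : T -> T) (E : T -> Prop) : Prop :=
  demigroup d /\ sub_idem E /\
  (forall s, E (d s)) /\
  (forall e, E e -> mul e (d e) = e).

Definition is_meet (E : T -> Prop) (meet : T -> T -> T) : Prop :=
  forall e f, E e -> E f ->
    E (meet e f) /\ le_r (meet e f) e /\ le_r (meet e f) f /\
    (forall g, E g -> le_r g e -> le_r g f -> le_r g (meet e f)).

Definition inductive_E_demigroup (d : T -> T) (E : T -> Prop)
    (meet : T -> T -> T) (dot : T -> T -> T) : Prop :=
  E_demigroup d E /\
  right_pre_reduced E /\
  is_meet E meet /\
  (forall s e, E e -> E (dot s e)) /\
  (forall t e s, E e ->
     ((mul (mul s t) e = mul s t /\ mul s (d t) = s) <-> mul s (dot t e) = s)) /\
  (forall s e f, E e -> E f -> mul s e = s -> mul s f = s ->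
     mul s (meet e f) = s).

Definition inC (d : T -> T) (E : T -> Prop) (p : T * T) : Prop :=
  E (fst p) /\ mul (fst p) (snd p) = snd p /\ d (fst p) = d (snd p).

Definition Pmul (meet : T -> T -> T) (dot : T -> T -> T) (p q : T * T) : T * T :=
  let g := meet (fst p) (dot (snd p) (fst q)) in
  (g, mul (mul g (snd p)) (snd q)).

Definition PD (p : T * T) : T * T := (fst p, fst p).

Definition left_restriction_on (U : Type) (P : U -> Prop)
    (m : U -> U -> U) (D : U -> U) : Prop :=
  (forall x y, P x -> P y -> P (m x y)) /\
  (forall x, P x -> P (D x)) /\
  (forall x y z, P x -> P y -> P z -> m x (m y z) = m (m x y) z) /\
  (forall x, P x -> m (D x) x = x) /\
  (forall x y, P x -> P y -> m (D x) (D y) = m (D y) (D x)) /\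
  (forall x y, P x -> P y -> D (m (D x) y) = m (D x) (D y)) /\
  (forall x y, P x -> P y -> m x (D y) = m (D (m x y)) x).

Definition nat_le (U : Type) (m : U -> U -> U) (D : U -> U) (x y : U) : Prop :=
  x = m (D x) y.

End Defs.

From Stdlib Require Import Setoid.

Set Implicit Arguments.

(* Everything is driven by "lower sets": for x in S write x <=r a for x = x a.
   By (I2) and (I1) these sets are described by simple equations,
     x <=r e /\ f   iff  x <=r e and x <=r f,
     x <=r t.f      iff  x t <=r f and x <=r d(t),
   and since E is right pre-reduced two idempotents of E with the same lower
   set coincide.  Hence for (e,s) in P the idempotent g = e /\ s.f of the
   product (e,s)(f,t) is characterised by  x <=r g  iff  x <=r e and x s <=r f.
   All identities between idempotents (commutativity of the meet, the two
   first components in the associativity law, ...) are proved by comparing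
   lower sets; the second components then follow by plain rewriting. *)

Section InducedLeftRestriction.

Variables (T : Type) (mul : T -> T -> T) (d : T -> T) (E : T -> Prop)
          (meet dot : T -> T -> T).

Local Infix "·" := mul (at level 40, left associativity).
Local Notation "x ≤ y" := (le_r mul x y) (at level 70).
Local Notation C := (inC mul d E).
Local Notation "p ⊗ q" := (Pmul mul meet dot p q) (at level 40).

Hypothesis mulA : associative_op mul.
Hypothesis d_mul : forall x y, d (x · y) = d (x · d y).
Hypothesis E_idem : sub_idem mul E.
Hypothesis E_d : forall e, E e -> e · d e = e.
Hypothesis E_reduced : right_pre_reduced mul E.
Hypothesis meet_spec : is_meet mul E meet.
Hypothesis dot_E : forall s e, E e -> E (dot s e).
Hypothesis I1 : forall t e s, E e ->
  ((s · t · e = s · t /\ s · d t = s) <-> s · dot t e = s).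
Hypothesis I2 : forall s e f, E e -> E f -> s · e = s -> s · f = s ->
  s · meet e f = s.

Lemma meet_E e f : E e -> E f -> E (meet e f).
Proof. intros He Hf; apply (meet_spec He Hf). Qed.

Lemma meet_lb_l e f : E e -> E f -> meet e f ≤ e.
Proof. intros He Hf; apply (meet_spec He Hf). Qed.

Lemma meet_lb_r e f : E e -> E f -> meet e f ≤ f.
Proof. intros He Hf; apply (meet_spec He Hf). Qed.

Lemma le_r_refl e : E e -> e ≤ e.
Proof. intros He; symmetry; exact (E_idem He). Qed.

Lemma le_r_trans x a b : x ≤ a -> a ≤ b -> x ≤ b.
Proof.
  unfold le_r; intros Hxa Hab.
  rewrite Hxa at 1. rewrite Hab, mulA, <- Hxa. reflexivity.
Qed.

Lemma le_r_d x e : E e -> x ≤ e -> x ≤ d e.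
Proof.
  unfold le_r; intros He Hxe.
  rewrite Hxe at 2. rewrite <- mulA, (E_d He). exact Hxe.
Qed.

Lemma E_ext a b : E a -> E b -> (forall x, x ≤ a <-> x ≤ b) -> a = b.
Proof.
  intros Ha Hb Hab. apply E_reduced; trivial.
  - apply Hab, le_r_refl, Ha.
  - apply Hab, le_r_refl, Hb.
Qed.

Lemma le_r_meet x e f : E e -> E f -> (x ≤ meet e f <-> x ≤ e /\ x ≤ f).
Proof.
  intros He Hf; split.
  - intros Hx; split; eapply le_r_trans; eauto using meet_lb_l, meet_lb_r.
  - intros [Hxe Hxf]; symmetry; apply I2; auto.
Qed.

Lemma le_r_dot x t f : E f -> (x ≤ dot t f <-> x · t ≤ f /\ x ≤ d t).
Proof.
  unfold le_r; intros Hf. pose proof (I1 t x Hf) as HI1. split.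
  - intros Hx; destruct (proj2 HI1 (eq_sym Hx)); split; symmetry; assumption.
  - intros [H1 H2]; symmetry; apply HI1; split; symmetry; assumption.
Qed.

Lemma le_r_restrict x e s f : C (e, s) -> E f ->
  (x ≤ meet e (dot s f) <-> x ≤ e /\ x · s ≤ f).
Proof.
  intros [He [_ Hdes]] Hf; cbn in Hdes.
  rewrite (le_r_meet x He (dot_E s Hf)), (le_r_dot x s Hf).
  split; [tauto |]. intros [Hxe Hxsf]; repeat split; trivial.
  rewrite <- Hdes; apply le_r_d; assumption.
Qed.

Lemma meet_comm e f : E e -> E f -> meet e f = meet f e.
Proof.
  intros He Hf; apply E_ext; auto using meet_E.
  intros x; rewrite (le_r_meet x He Hf), (le_r_meet x Hf He); tauto.
Qed.

Lemma meet_of_le e f : E e -> E f -> e ≤ f -> meet e f = e.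
Proof.
  intros He Hf Hef; apply E_ext; auto using meet_E.
  intros x; rewrite (le_r_meet x He Hf).
  split; [tauto |]. intros Hxe; split; [| eapply le_r_trans]; eauto.
Qed.

Lemma meet_dot_self e f : E e -> E f -> meet e (dot e f) = meet e f.
Proof.
  intros He Hf.
  assert (Hee : C (e, e)) by (repeat split; auto; apply E_idem, He).
  apply E_ext; auto using meet_E, dot_E.
  intros x; rewrite (le_r_restrict x Hee Hf), (le_r_meet x He Hf).
  split; intros [Hxe H]; split; trivial; congruence.
Qed.

Lemma restrict_spec e s f : C (e, s) -> E f ->
  E (meet e (dot s f)) /\ meet e (dot s f) ≤ e /\ meet e (dot s f) · s ≤ f.
Proof.
  intros Hes Hf.
  assert (Hg : E (meet e (dot s f))) by (apply meet_E; [apply Hes | auto]).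
  split; [exact Hg |]. apply (le_r_restrict _ Hes Hf), le_r_refl, Hg.
Qed.

Lemma Pmul_inC p q : C p -> C q -> C (p ⊗ q).
Proof.
  destruct p as [e s], q as [f t]. intros Hes [Hf [_ Hdft]]; cbn in Hf, Hdft.
  destruct (restrict_spec Hes Hf) as [Hg [Hge Hgsf]].
  unfold Pmul, inC; cbn. set (g := meet e (dot s f)) in *.
  assert (Hgde : g ≤ d e) by (apply le_r_d; [apply Hes | exact Hge]).
  repeat split; trivial.
  - rewrite !mulA, (E_idem Hg). reflexivity.
  - (* d(g s t) = d(g s d f) = d(g s f) = d(g s) = d(g d e) = d(g) *)
    rewrite d_mul, <- Hdft, <- d_mul, <- Hgsf, d_mul.
    destruct Hes as [_ [_ Hdes]]; cbn in Hdes.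
    rewrite <- Hdes, <- Hgde. reflexivity.
Qed.

Lemma PD_inC p : C p -> C (PD p).
Proof.
  destruct p as [e s]; intros [He _]. repeat split; trivial. apply E_idem, He.
Qed.

(* The first components of (e,s)((f,t)(k,u)) and ((e,s)(f,t))(k,u) agree:
   both have lower set {x | x <=r e, x s <=r f, x s t <=r k}. *)
Lemma restrict_assoc e s f t k : C (e, s) -> C (f, t) -> E k ->
  meet (meet e (dot s f)) (dot (meet e (dot s f) · s · t) k)
  = meet e (dot s (meet f (dot t k))).
Proof.
  intros Hes Hft Hk.
  pose proof Hes as [He _]; pose proof Hft as [Hf [_ Hdft]]; cbn in He, Hf, Hdft.
  pose proof (Pmul_inC Hes Hft) as Hprod. unfold Pmul in Hprod; simpl in Hprod.
  destruct (restrict_spec Hes Hf) as [Hg _].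
  destruct (restrict_spec Hft Hk) as [Hg' _].
  apply E_ext; [apply meet_E; auto | apply meet_E; auto |].
  intros x.
  rewrite (le_r_restrict x Hprod Hk), (le_r_restrict x Hes Hf).
  rewrite (le_r_restrict x Hes Hg'), (le_r_meet _ Hf (dot_E t Hk)).
  rewrite (le_r_dot _ t Hk).
  split.
  - intros [[Hxe Hxsf] Hxgst]; repeat split; trivial.
    + unfold le_r in Hxgst |- *.
      assert (Hxg : x ≤ meet e (dot s f)) by (apply le_r_restrict; auto).
      rewrite !mulA, <- Hxg in Hxgst. exact Hxgst.
    + rewrite <- Hdft; apply le_r_d; assumption.
  - intros [Hxe [Hxsf [Hxst _]]]; repeat split; trivial.
    unfold le_r in Hxst |- *.
    assert (Hxg : x ≤ meet e (dot s f)) by (apply le_r_restrict; auto).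
    rewrite !mulA, <- Hxg. exact Hxst.
Qed.

(* Associativity: with h the common first component, both second components
   reduce to h s t u, since h <=r e /\ s.f and h s <=r f /\ t.k. *)
Lemma Pmul_assoc p q r : C p -> C q -> C r -> p ⊗ (q ⊗ r) = (p ⊗ q) ⊗ r.
Proof.
  destruct p as [e s], q as [f t], r as [k u]. intros Hes Hft Hku.
  pose proof Hft as [Hf _]; pose proof Hku as [Hk _]; cbn in Hf, Hk.
  pose proof (Pmul_inC Hes Hft) as Hprod. unfold Pmul in Hprod |- *; simpl in *.
  destruct (restrict_spec Hprod Hk) as [_ [Hhg _]].
  destruct (restrict_spec Hft Hk) as [Hg' _].
  destruct (restrict_spec Hes Hg') as [_ [_ Hhsg']].
  rewrite (restrict_assoc Hes Hft Hk) in Hhg |- *.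
  f_equal. unfold le_r in Hhg, Hhsg'.
  rewrite !mulA, <- Hhsg', <- Hhg. reflexivity.
Qed.

Lemma Pmul_idem_left e f y : E e -> E f ->
  (e, e) ⊗ (f, y) = (meet e f, meet e f · y).
Proof.
  intros He Hf; unfold Pmul; simpl.
  rewrite (meet_dot_self He Hf), <- (meet_lb_l He Hf). reflexivity.
Qed.

Lemma PD_left_unit p : C p -> PD p ⊗ p = p.
Proof.
  destruct p as [e s]; intros [He [Hes _]]; cbn in He, Hes.
  unfold PD; cbn [fst snd].
  rewrite (Pmul_idem_left s He He), (meet_of_le He He (le_r_refl He)), Hes.
  reflexivity.
Qed.

Lemma PD_mul p q : C p -> C q ->
  PD p ⊗ PD q = (meet (fst p) (fst q), meet (fst p) (fst q)).
Proof.
  destruct p as [e s], q as [f t]; intros [He _] [Hf _]; cbn in He, Hf.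
  unfold PD; cbn [fst snd].
  rewrite (Pmul_idem_left f He Hf), <- (meet_lb_r He Hf). reflexivity.
Qed.

Lemma PD_comm p q : C p -> C q -> PD p ⊗ PD q = PD q ⊗ PD p.
Proof.
  intros Hp Hq; rewrite (PD_mul Hp Hq), (PD_mul Hq Hp), meet_comm; trivial.
  - apply Hp.
  - apply Hq.
Qed.

Lemma PD_PD_mul p q : C p -> C q -> PD (PD p ⊗ q) = PD p ⊗ PD q.
Proof.
  destruct p as [e s], q as [f t]; intros Hp Hq.
  pose proof Hp as [He _]; pose proof Hq as [Hf _]; cbn in He, Hf.
  rewrite (PD_mul Hp Hq); unfold PD; cbn [fst snd].
  rewrite (Pmul_idem_left t He Hf). reflexivity.
Qed.

Lemma Pmul_ample p q : C p -> C q -> p ⊗ PD q = PD (p ⊗ q) ⊗ p.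
Proof.
  destruct p as [e s], q as [f t]; intros Hes [Hf _]; cbn in Hf.
  pose proof Hes as [He _]; cbn in He.
  destruct (restrict_spec Hes Hf) as [Hg [Hge Hgsf]].
  unfold Pmul, PD; simpl. set (g := meet e (dot s f)) in *.
  rewrite (meet_dot_self Hg He), (meet_of_le Hg He Hge).
  rewrite (E_idem Hg), <- Hgsf. reflexivity.
Qed.

Theorem induced_left_restriction :
  left_restriction_on C (Pmul mul meet dot) (@PD T).
Proof.
  exact (conj Pmul_inC (conj PD_inC (conj Pmul_assoc (conj PD_left_unit
           (conj PD_comm (conj PD_PD_mul Pmul_ample)))))).
Qed.

Theorem natural_order_char e s f t : C (e, s) -> C (f, t) ->
  (nat_le (Pmul mul meet dot) (@PD T) (e, s) (f, t) <-> e ≤ f /\ s = e · t).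
Proof.
  intros [He _] [Hf _]; cbn in He, Hf. unfold nat_le, PD; cbn [fst snd].
  rewrite (Pmul_idem_left t He Hf). split.
  - intros Heq; injection Heq as Hmeet Hs. split.
    + rewrite Hmeet; apply meet_lb_r; assumption.
    + rewrite Hs, <- Hmeet. reflexivity.
  - intros [Hef Hs]; rewrite (meet_of_le He Hf Hef), Hs. reflexivity.
Qed.

End InducedLeftRestriction.

Theorem corollary3p8 (T : Type) (mul : T -> T -> T) (d : T -> T)
    (E : T -> Prop) (meet : T -> T -> T) (dot : T -> T -> T) :
  inductive_E_demigroup mul d E meet dot ->
  left_restriction_on (inC mul d E) (Pmul mul meet dot) (@PD T) /\
  (forall e s f t, inC mul d E (e, s) -> inC mul d E (f, t) ->
     (nat_le (Pmul mul meet dot) (@PD T) (e, s) (f, t) <->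
      (le_r mul e f /\ s = mul e t))).
Proof.
  intros [[[mulA [_ [_ d_mul]]] [E_idem [_ E_d]]]
          [E_reduced [meet_spec [dot_E [I1 I2]]]]].
  split.
  - eapply induced_left_restriction; eassumption.
  - intros e s f t; eapply natural_order_char; eassumption.
Qed.
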